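(* Let $L\geq 1$ be an integer, $P\geq 0$, and $p_B\in[0,1]$. Let $\beta_1,\ldots,\beta_L$ be i.i.d. with $\mathbb{P}(\beta_l=0)=p_B$, $\mathbb{P}(\beta_l=1)=1-p_B$, and $\theta_1,\ldots,\theta_L$ i.i.d. $\mathrm{Uniform}(0,2\pi)$ independent of the $\beta_l$. Set $\mathbf{h}=[\beta_1e^{j\theta_1},\ldots,\beta_Le^{j\theta_L}]^{\mathsf T}$ and $\alpha=\sum_{l=1}^L\beta_l$. Then $$\sup\Big\{\mathbb{E}\big[\log(1+\mathbf{h}^{\mathsf H}\mathbf{Q}\mathbf{h})\big]\;:\;\mathbf{Q}\in\mathbb{C}^{L\times L}\text{ Hermitian positive semidefinite},\ [\mathbf{Q}]_{l,l}\leq P\ \forall l\Big\}=\mathbb{E}[\log(1+\alpha P)],$$ i.e. the ergodic capacity without channel state information at the transmitters equals the one with knowledge of the blockage state $\boldsymbol{\beta}$ at the transmitters.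
   Context: The supremum is over input covariance matrices that do not depend on the channel state (no transmitter channel state information). $\log$ is the logarithm in a fixed base; $\alpha\sim\mathrm{Binomial}(L,1-p_B)$ is the number of non-blocked transmitters. *)

From HB Require Import structures.
From mathcomp Require Import all_boot all_order all_algebra.
From mathcomp Require Import complex.
From mathcomp Require Import all_classical all_reals all_analysis.
Set Implicit Arguments. Unset Strict Implicit. Unset Printing Implicit Defensive.
Import Order.TTheory GRing.Theory Num.Theory.
Local Open Scope ring_scope.
Local Open Scope classical_set_scope.

Definition logb (R : realType) (b x : R) : R := ln x / ln b.

Definition unif_avg (R : realType) (f : R -> R) : R :=
  (2 * pi)^-1 * Rintegral (@lebesgue_measure R) `[0, 2 * pi]%classic f.

(* expectation of g(theta_0, ..., theta_{n-1}) for theta_i i.i.d.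
   Uniform(0, 2 pi), as an iterated integral over each coordinate. *)
Fixpoint iid_unif_exp (R : realType) (n : nat) (g : (nat -> R) -> R) : R :=
  match n with
  | 0 => g (fun _ => 0)
  | m.+1 => unif_avg (fun x =>
       iid_unif_exp m (fun t => g (fun k => if k == m then x else t k)))
  end.

Definition beta_prob (R : realType) (L : nat) (pB : R)
  (beta : {ffun 'I_L -> bool}) : R :=
  \prod_(l < L) (if beta l then 1 - pB else pB).

Definition expj (R : realType) (t : R) : R[i] := (cos t +i* sin t)%C.

Definition chan (R : realType) (L : nat) (beta : {ffun 'I_L -> bool})
  (theta : nat -> R) : 'cV[R[i]]_L :=
  \col_(l < L) ((beta l)%:R * expj (theta l)).

Definition ctrmx (R : realType) (m n : nat) (A : 'M[R[i]]_(m, n)) :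
  'M[R[i]]_(n, m) := (map_mx conjc A)^T.

Definition hermitian_psd (R : realType) (L : nat) (Q : 'M[R[i]]_L) : Prop :=
  ctrmx Q = Q /\ forall v : 'cV[R[i]]_L, 0 <= (ctrmx v *m Q *m v) 0 0.

Definition ergodic_rate (R : realType) (L : nat) (pB b : R)
  (Q : 'M[R[i]]_L) : R :=
  \sum_(beta : {ffun 'I_L -> bool}) beta_prob pB beta *
    iid_unif_exp L (fun theta =>
      logb b (1 + complex.Re ((ctrmx (chan beta theta) *m Q *m chan beta theta) 0 0))).

Definition blockage_rate (R : realType) (L : nat) (pB b P : R) : R :=
  \sum_(beta : {ffun 'I_L -> bool}) beta_prob pB beta *
    logb b (1 + (\sum_(l < L) (beta l : nat))%:R * P).

From Pilot Require Import Defs.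
From HB Require Import structures.
From mathcomp Require Import all_boot all_order all_algebra.
From mathcomp Require Import complex.
From mathcomp Require Import all_classical all_reals all_analysis.
From mathcomp Require Import ring.
Import Order.TTheory GRing.Theory Num.Theory.
Import numFieldNormedType.Exports.

(* Fix a blockage pattern beta, so that h = (beta_l e^{j theta_l})_l with
   independent uniform phases.  Averaging out one phase theta_n, the others
   being frozen, 1 + h^H Q h has the form A + p cos theta_n + q sin theta_n,
   where A already contains the diagonal contribution beta_n Q_nn; the tangent
   of the concave logarithm at A bounds the average of its logarithm by log A,
   the oscillating terms averaging to zero.  Iterating over all phases gives
   E log (1 + h^H Q h) <= log (1 + sum_l beta_l Q_ll) <= log (1 + alpha P),
   and Q = P I attains this bound because h^H h = alpha. *)

Set Implicit Arguments.
Unset Strict Implicit.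
Unset Printing Implicit Defensive.

Local Open Scope ring_scope.
Local Open Scope classical_set_scope.

Section ge0_integral_monotone.
Context d (T : measurableType d) (R : realType) (mu : {measure set T -> \bar R}).

(* No measurability is needed, since a nonnegative integral is the supremum of
   the integrals of the simple functions below the integrand; the iterated
   phase averages below are never shown to be measurable. *)
Lemma ge0_le_integral_nonmeasurable (D : set T) (f g : T -> \bar R) :
  (forall x, D x -> 0 <= f x)%E -> (forall x, D x -> f x <= g x)%E ->
  (\int[mu]_(x in D) f x <= \int[mu]_(x in D) g x)%E.
Proof.
move=> f0 fg.
have g0 x : D x -> (0 <= g x)%E by move=> Dx; exact: le_trans (f0 x Dx) (fg x Dx).
rewrite !ge0_integralE //; apply: ereal_sup_le => _ [h hf <-]; exists h => // x.
apply: le_trans (hf x) _; rewrite /patch; case: ifP => // /set_mem Dx; exact: fg.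
Qed.

Lemma ge0_le_Rintegral_nonmeasurable (D : set T) (f g : T -> R) :
  measurable D -> (forall x, D x -> 0 <= f x <= g x) ->
  mu.-integrable D (EFin \o g) ->
  \int[mu]_(x in D) f x <= \int[mu]_(x in D) g x.
Proof.
move=> mD fg ig.
have f0 : (0 <= \int[mu]_(x in D) (f x)%:E)%E.
  by apply: integral_ge0 => x /fg /andP[fx0 _]; rewrite lee_fin.
have le_fg : (\int[mu]_(x in D) (f x)%:E <= \int[mu]_(x in D) (g x)%:E)%E.
  by apply: ge0_le_integral_nonmeasurable => x /fg /andP[fx0 fgx]; rewrite lee_fin.
have gfin := integrable_fin_num mD ig.
apply: (fine_le _ gfin le_fg); rewrite ge0_fin_numE //.
by apply: le_lt_trans le_fg _; rewrite ltey_eq gfin.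
Qed.

End ge0_integral_monotone.

Lemma sup_eq_max (R : realType) (E : set R) (x : R) : E x -> ubound E x -> sup E = x.
Proof.
move=> Ex ubx; apply/eqP; rewrite eq_le ge_sup ?ub_le_sup //; by exists x.
Qed.

Section uniform_phase_average.
Variable R : realType.

Lemma is_derive_trig (a0 a1 a2 x : R) :
  is_derive x 1 (fun y => a0 + a1 * cos y + a2 * sin y) (a2 * cos x - a1 * sin x).
Proof. by apply: is_derive_eq; rewrite /GRing.scale /=; ring. Qed.

Lemma continuous_trig (a0 a1 a2 : R) :
  continuous (fun x : R => a0 + a1 * cos x + a2 * sin x).
Proof.
move=> x; apply: differentiable_continuous; apply/derivable1_diffP.
by case: (is_derive_trig a0 a1 a2 x).
Qed.

Lemma unif_avg_trig (a0 a1 a2 : R) :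
  unif_avg (fun x => a0 + a1 * cos x + a2 * sin x) = a0.
Proof.
have pi2_gt0 : 0 < 2 * pi :> R by rewrite mulr_gt0 ?pi_gt0.
pose F x := a0 * x + a1 * sin x - a2 * cos x.
have dF (x : R) : is_derive x (1 : R) F (a0 + a1 * cos x + a2 * sin x).
  by apply: is_derive_eq; rewrite /GRing.scale /=; ring.
have cF : continuous F.
  move=> x; apply: differentiable_continuous; apply/derivable1_diffP.
  by case: (dF x).
rewrite /unif_avg /Rintegral (@continuous_FTC2 _ _ F) //=.
- have cos2pi' : cos (2 * pi) = 1 :> R by rewrite mulr_natl cos2pi.
  have sin2pi' : sin (2 * pi) = 0 :> R by rewrite mulr_natl sin2pi.
  rewrite /F cos2pi' sin2pi' cos0 sin0.
  transitivity ((2 * pi)^-1 * (a0 * (2 * pi))); first by congr (_ * _); ring.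
  by rewrite mulrC mulfK // gt_eqF.
- exact/continuous_subspaceT/continuous_trig.
- split; first by move=> x _; case: (dF x).
  + exact: cvg_at_right_filter (cF 0).
  + exact: cvg_at_left_filter (cF _).
- by move=> x _; rewrite derive1E; exact: derive_val.
Qed.

Lemma unif_avg_cst (c : R) : unif_avg (fun _ => c) = c.
Proof.
rewrite -[RHS](unif_avg_trig c 0 0); congr unif_avg; apply: funext => x.
by rewrite !mul0r !addr0.
Qed.

Lemma unif_avg_ge0 (f : R -> R) : (forall x, 0 <= f x) -> 0 <= unif_avg f.
Proof.
by move=> f0; rewrite /unif_avg mulr_ge0 ?Rintegral_ge0 // invr_ge0 mulr_ge0 ?pi_ge0.
Qed.

Lemma unif_avg_le_trig (f : R -> R) (a0 a1 a2 : R) :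
  (forall x, 0 <= f x <= a0 + a1 * cos x + a2 * sin x) -> unif_avg f <= a0.
Proof.
move=> fle; rewrite -[leRHS](unif_avg_trig a0 a1 a2) /unif_avg.
apply: ler_wpM2l; first by rewrite invr_ge0 mulr_ge0 ?pi_ge0.
apply: ge0_le_Rintegral_nonmeasurable => //.
apply: continuous_compact_integrable; first exact: segment_compact.
exact/continuous_subspaceT/continuous_trig.
Qed.

Lemma ln_le_tangent (A y : R) : 0 < A -> 0 < y -> ln y <= ln A + (y - A) / A.
Proof.
move=> A0 y0.
have yA0 : 0 < y / A by rewrite divr_gt0.
have -> : (y - A) / A = y / A - 1 by rewrite mulrBl divff ?gt_eqF.
have yE : y = A * (y / A) by rewrite mulrC divfK ?gt_eqF.
rewrite [y in ln y]yE lnM ?posrE // lerD2l.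
by rewrite -[in leLHS](subrKC 1 (y / A)) le_ln1Dx // ltrBrDl subrr.
Qed.

Section logarithm_base.
Variable b : R.
Hypothesis b_gt1 : 1 < b.

Lemma logb_ge0 (y : R) : 1 <= y -> 0 <= logb b y.
Proof. by move=> y1; rewrite /logb divr_ge0 ?ln_ge0 // ltW. Qed.

Lemma ler_logb (x y : R) : 0 < x -> x <= y -> logb b x <= logb b y.
Proof.
move=> x0 xy; rewrite /logb ler_pM2r ?invr_gt0 ?ln_gt0 //.
by rewrite ler_ln ?posrE // (lt_le_trans x0).
Qed.

Lemma logb_le_tangent (A y : R) : 0 < A -> 0 < y ->
  logb b y <= logb b A + (y - A) / (A * ln b).
Proof.
move=> A0 y0; have lnb0 : 0 < ln b by rewrite ln_gt0.
rewrite /logb invfM mulrA -mulrDl ler_pM2r ?invr_gt0 //.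
exact: ln_le_tangent.
Qed.

(* Jensen's inequality through the tangent of [logb b] at [A], whose
   oscillating terms average out. *)
Lemma unif_avg_le_logb_trig (A p s : R) (u : R -> R) : 0 < A ->
  (forall x, 0 < A + p * cos x + s * sin x) ->
  (forall x, 0 <= u x <= logb b (A + p * cos x + s * sin x)) ->
  unif_avg u <= logb b A.
Proof.
move=> A0 pos ule; pose k := (A * ln b)^-1.
apply: (@unif_avg_le_trig _ _ (p * k) (s * k)) => x.
case/andP: (ule x) => -> /le_trans -> //=.
have -> : logb b A + p * k * cos x + s * k * sin x =
          logb b A + (A + p * cos x + s * sin x - A) / (A * ln b) by rewrite /k; ring.
exact: logb_le_tangent.
Qed.

End logarithm_base.
End uniform_phase_average.

Lemma iid_unif_exp_ge0 (R : realType) (n : nat) (g : (nat -> R) -> R) :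
  (forall t, 0 <= g t) -> 0 <= iid_unif_exp n g.
Proof.
elim: n g => [|n IH] g g0 //=.
by apply: unif_avg_ge0 => x; apply: IH.
Qed.

Lemma iid_unif_exp_cst (R : realType) (n : nat) (c : R) :
  iid_unif_exp n (fun _ => c) = c.
Proof. by elim: n => //= n IH; rewrite IH unif_avg_cst. Qed.

Section conjugate_transpose.
Variable R : realType.

Lemma ctrmxD (m n : nat) (A B : 'M[R[i]]_(m, n)) : ctrmx (A + B) = ctrmx A + ctrmx B.
Proof. by rewrite /ctrmx map_mxD linearD. Qed.

Lemma ctrmxZ (m n : nat) (z : R[i]) (A : 'M[R[i]]_(m, n)) :
  ctrmx (z *: A) = z^*%C *: ctrmx A.
Proof. by rewrite /ctrmx map_mxZ linearZ. Qed.

Lemma ctrmxM (m n p : nat) (A : 'M[R[i]]_(m, n)) (B : 'M[R[i]]_(n, p)) :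
  ctrmx (A *m B) = ctrmx B *m ctrmx A.
Proof. by rewrite /ctrmx map_mxM trmx_mul. Qed.

Lemma ctrmx_delta (m n : nat) (i : 'I_m) (j : 'I_n) :
  ctrmx (delta_mx i j : 'M[R[i]]_(m, n)) = delta_mx j i.
Proof. by rewrite /ctrmx map_delta_mx trmx_delta. Qed.

End conjugate_transpose.

Section quadratic_form.
Variables (R : realType) (L : nat) (Q : 'M[R[i]]_L).

Definition qform (v : 'cV[R[i]]_L) : R[i] := (ctrmx v *m Q *m v) 0 0.

Lemma qform0 : qform 0 = 0.
Proof. by rewrite /qform mulmx0 mxE. Qed.

Lemma qform_delta (l : 'I_L) : qform (delta_mx l 0) = Q l l.
Proof. by rewrite /qform ctrmx_delta -rowE -colE !mxE. Qed.

Hypothesis Q_herm : ctrmx Q = Q.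

Lemma qform_add_delta (a : 'cV[R[i]]_L) (z : R[i]) (n : 'I_L) :
  let X := (Q *m a) n 0 in
  qform (a + z *: delta_mx n 0) = qform a + z^*%C * z * Q n n + (z^*%C * X + z * X^*%C).
Proof.
move=> X; rewrite /qform ctrmxD ctrmxZ ctrmx_delta.
have addE (A B : 'M[R[i]]_1) : (A + B) 0 0 = A 0 0 + B 0 0 by rewrite mxE.
have scaleE (c : R[i]) (A : 'M[R[i]]_1) : (c *: A) 0 0 = c * A 0 0 by rewrite mxE.
have colE0 (A : 'rV[R[i]]_L) : (A *m delta_mx n (0 : 'I_1)) 0 0 = A 0 n by rewrite -colE mxE.
have rowE0 (p : nat) (B : 'M[R[i]]_(L, p)) k : (delta_mx (0 : 'I_1) n *m B) 0 k = B n k.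
  by rewrite -rowE mxE.
have XJ : (ctrmx a *m Q) 0 n = X^*%C by rewrite -[in LHS]Q_herm -ctrmxM /ctrmx 2!mxE.
rewrite !mulmxDl !mulmxDr -!scalemxAl -!scalemxAr !addE !scaleE !colE0 -!mulmxA !rowE0.
by rewrite XJ -/X; ring.
Qed.

Lemma Re_qform_add_phase (a : 'cV[R[i]]_L) (r x : R) (n : 'I_L) :
  let X := (Q *m a) n 0 in
  complex.Re (qform (a + ((r%:C)%C * expj x) *: delta_mx n 0)) =
  complex.Re (qform a) + r ^+ 2 * complex.Re (Q n n)
  + 2 * r * complex.Re X * cos x + 2 * r * complex.Im X * sin x.
Proof.
move=> X; rewrite qform_add_delta -/X.
move: (qform a) (Q n n) X => [qr qi] [q q'] [xr xi].
rewrite /expj /=.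
transitivity (qr + r ^+ 2 * q * (cos x ^+ 2 + sin x ^+ 2) + 2 * r * xr * cos x
              + 2 * r * xi * sin x); first by ring.
by rewrite cos2Dsin2 mulr1.
Qed.

End quadratic_form.

Section phase_randomization.
Variables (R : realType) (L : nat) (Q : 'M[R[i]]_L) (r : 'I_L -> R) (b : R).
Hypotheses (Q_psd : hermitian_psd Q) (b_gt1 : 1 < b).

Lemma Re_qform_ge0 (v : 'cV[R[i]]_L) : 0 <= complex.Re (qform Q v).
Proof. by case: Q_psd => _ /(_ v); rewrite lecE => /andP[]. Qed.

Lemma Re_diag_ge0 (l : 'I_L) : 0 <= complex.Re (Q l l).
Proof. by rewrite -qform_delta Re_qform_ge0. Qed.

Definition phase_col (n : nat) (t : nat -> R) (w : 'cV[R[i]]_L) : 'cV[R[i]]_L :=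
  \col_(l < L) if (l < n)%N then ((r l)%:C * expj (t l))%C else w l 0.

Definition diag_gain (n : nat) : R :=
  \sum_(l < L | (l < n)%N) r l ^+ 2 * complex.Re (Q l l).

Lemma diag_gain_ge0 (n : nat) : 0 <= diag_gain n.
Proof. by apply: sumr_ge0 => l _; rewrite mulr_ge0 ?sqr_ge0 ?Re_diag_ge0. Qed.

Lemma diag_gainS (n : nat) (hn : (n < L)%N) :
  diag_gain n.+1 = diag_gain n + r (Ordinal hn) ^+ 2 * complex.Re (Q (Ordinal hn) (Ordinal hn)).
Proof.
rewrite /diag_gain (bigD1 (Ordinal hn)) //= addrC; congr (_ + _).
by apply: eq_bigl => l; rewrite -val_eqE /= ltnS leq_eqVlt; case: ltngtP.
Qed.

Lemma phase_col0 (t : nat -> R) (w : 'cV[R[i]]_L) : phase_col 0 t w = w.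
Proof. by apply/matrixP => l j; rewrite mxE [j]ord1. Qed.

Lemma phase_colS (n : nat) (hn : (n < L)%N) (t : nat -> R) (x : R) (w : 'cV[R[i]]_L) :
  w (Ordinal hn) 0 = 0 ->
  phase_col n.+1 (fun k => if k == n then x else t k) w =
  phase_col n t (w + ((r (Ordinal hn))%:C * expj x)%C *: delta_mx (Ordinal hn) 0).
Proof.
move=> wn0; apply/matrixP => l j; rewrite !mxE eqxx andbT /= ltnS.
case: (ltngtP l n) => [// | nl | ln].
  by rewrite -val_eqE /= gtn_eqF // mulr0 addr0.
have -> : l = Ordinal hn by apply: val_inj.
by rewrite wn0 eqxx add0r mulr1.
Qed.

(* [iid_unif_exp] averages out the last phase first, so [w] holds the
   coordinates whose phases are already fixed by the outer averages. *)
Lemma iid_unif_exp_logb_phase_col_le (n : nat) : (n <= L)%N ->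
  forall w : 'cV[R[i]]_L, (forall l : 'I_L, (l < n)%N -> w l 0 = 0) ->
  iid_unif_exp n (fun t => logb b (1 + complex.Re (qform Q (phase_col n t w))))
  <= logb b (1 + diag_gain n + complex.Re (qform Q w)).
Proof.
elim: n => [_ w _ | n IH hn w w0].
  by rewrite /= phase_col0 /diag_gain big_pred0 ?addr0.
pose N := Ordinal hn; pose z x := ((r N)%:C * expj x)%C.
pose X := (Q *m w) N 0; pose A := 1 + diag_gain n.+1 + complex.Re (qform Q w).
have A_ge1 : 1 <= A by rewrite /A -addrA lerDl addr_ge0 ?diag_gain_ge0 ?Re_qform_ge0.
have gainE x : 1 + diag_gain n + complex.Re (qform Q (w + z x *: delta_mx N 0)) =
    A + (2 * r N * complex.Re X) * cos x + (2 * r N * complex.Im X) * sin x.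
  by rewrite Re_qform_add_phase; [rewrite /A (diag_gainS hn); ring | case: Q_psd].
have gain_ge1 v : 1 <= 1 + diag_gain n + complex.Re (qform Q v).
  by rewrite -addrA lerDl addr_ge0 ?diag_gain_ge0 ?Re_qform_ge0.
apply: (unif_avg_le_logb_trig (p := 2 * r N * complex.Re X) (s := 2 * r N * complex.Im X)
          b_gt1) => [| x | x].
- exact: lt_le_trans A_ge1.
- by rewrite -gainE (lt_le_trans _ (gain_ge1 _)).
apply/andP; split.
  apply: iid_unif_exp_ge0 => t; apply: logb_ge0 => //.
  by rewrite lerDl Re_qform_ge0.
rewrite -gainE.
have -> : (fun t => logb b (1 + complex.Re (qform Q
             (phase_col n.+1 (fun k => if k == n then x else t k) w)))) =
          (fun t => logb b (1 + complex.Re (qform Q (phase_col n t (w + z x *: delta_mx N 0))))).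
  by apply: funext => t; rewrite phase_colS // w0.
apply: IH => [|l ln]; first exact: ltnW.
by rewrite !mxE w0 ?leqW // -val_eqE /= ltn_eqF // mulr0 addr0.
Qed.

Lemma iid_unif_exp_logb_qform_le :
  iid_unif_exp L (fun t =>
    logb b (1 + complex.Re (qform Q (\col_(l < L) ((r l)%:C * expj (t l))%C))))
  <= logb b (1 + \sum_(l < L) r l ^+ 2 * complex.Re (Q l l)).
Proof.
have zero_entries (l : 'I_L) : (l < L)%N -> (0 : 'cV[R[i]]_L) l 0 = 0 by rewrite mxE.
have := iid_unif_exp_logb_phase_col_le (leqnn L) zero_entries.
rewrite qform0 addr0 /diag_gain (eq_bigl xpredT) => [|l]; last exact: ltn_ord.
congr (_ <= _); congr iid_unif_exp; apply: funext => t.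
congr (logb b (1 + complex.Re (qform Q _))).
by apply/matrixP => l j; rewrite !mxE ltn_ord.
Qed.

End phase_randomization.

Section blockage.
Variables (R : realType) (L : nat) (P pB b : R).

(* Unqualified, [beta_prob] is the beta distribution of mathcomp-analysis. *)
Lemma beta_prob_ge0 (beta : {ffun 'I_L -> bool}) : 0 <= pB <= 1 -> 0 <= Defs.beta_prob pB beta.
Proof.
by case/andP=> pB0 pB1; apply: prodr_ge0 => l _; case: (beta l); rewrite ?subr_ge0.
Qed.

Lemma chanE (beta : {ffun 'I_L -> bool}) (theta : nat -> R) :
  chan beta theta = \col_(l < L) ((((beta l)%:R : R)%:C * expj (theta l))%C).
Proof. by apply/matrixP => l j; rewrite !mxE rmorph_nat. Qed.

Lemma ergodic_rate_le_blockage_rate (Q : 'M[R[i]]_L) :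
  0 <= pB <= 1 -> 1 < b -> hermitian_psd Q -> (forall l : 'I_L, Q l l <= (P%:C)%C) ->
  ergodic_rate pB b Q <= blockage_rate L pB b P.
Proof.
move=> pB01 b_gt1 Q_psd Q_diag; apply: ler_sum => beta _.
apply: ler_wpM2l; first exact: beta_prob_ge0.
have -> : (fun theta => logb b (1 + complex.Re
            ((ctrmx (chan beta theta) *m Q *m chan beta theta) 0 0))) =
          (fun theta => logb b (1 + complex.Re (qform Q
            (\col_(l < L) ((((beta l)%:R : R)%:C * expj (theta l))%C))))).
  by apply: funext => theta; rewrite /qform chanE.
apply: le_trans (iid_unif_exp_logb_qform_le _ Q_psd b_gt1) _.
apply: ler_logb => //.
  apply: (lt_le_trans ltr01); rewrite lerDl; apply: sumr_ge0 => l _.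
  by rewrite mulr_ge0 ?sqr_ge0 ?Re_diag_ge0.
rewrite lerD2l natr_sum mulr_suml; apply: ler_sum => l _.
move: (Q_diag l); rewrite lecE => /andP[_ QllP].
by case: (beta l); rewrite ?expr0n ?mul0r // expr1n !mul1r.
Qed.

Lemma hermitian_psd_scalar : 0 <= P -> hermitian_psd ((P%:C)%C%:M : 'M[R[i]]_L).
Proof.
move=> P0; split.
  apply/matrixP => i j; rewrite !mxE eq_sym.
  by case: (i == j); rewrite ?mulr1n ?mulr0n ?conjc_real ?conjc0.
move=> v; rewrite mul_mx_scalar -scalemxAl mxE mulr_ge0 ?ler0c // mxE.
by apply: sumr_ge0 => j _; rewrite !mxE mulrC mulcJ_ge0.
Qed.

Lemma ergodic_rate_scalar : ergodic_rate pB b ((P%:C)%C%:M : 'M[R[i]]_L) = blockage_rate L pB b P.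
Proof.
apply: eq_bigr => beta _; congr (_ * _).
rewrite -[RHS](iid_unif_exp_cst L); congr iid_unif_exp; apply: funext => t.
congr (logb b (1 + _)).
rewrite mul_mx_scalar -scalemxAl mxE mxE.
have hJh j : (ctrmx (chan beta t)) 0 j * chan beta t j 0 = (((beta j : nat)%:R : R)%:C)%C.
  rewrite !mxE /expj; have cs := cos2Dsin2 (t j).
  case: (beta j) => /=; apply/eqP; rewrite eq_complex /=; apply/andP; split; apply/eqP.
  - by transitivity (cos (t j) ^+ 2 + sin (t j) ^+ 2); [ring | exact: cs].
  - by ring.
  - by ring.
  - by ring.
rewrite (eq_bigr _ (fun j _ => hJh j)) -rmorph_sum -rmorphM /=.
by rewrite natr_sum mulrC.
Qed.

End blockage.

Theorem corollary1 (R : realType) (L : nat) (P pB b : R) :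
  (1 <= L)%N -> 0 <= P -> 0 <= pB <= 1 -> 1 < b ->
  sup [set @ergodic_rate R L pB b Q | Q in
        [set Q : 'M[R[i]]_L | hermitian_psd Q /\
                              forall l : 'I_L, Q l l <= (P%:C)%C]]
  = @blockage_rate R L pB b P.
Proof.
move=> _ P0 pB01 b_gt1; apply: sup_eq_max.
- exists ((P%:C)%C%:M); last exact: ergodic_rate_scalar.
  split; first exact: hermitian_psd_scalar.
  by move=> l; rewrite mxE eqxx mulr1n.
- by move=> _ [Q [Q_psd Q_diag] <-]; exact: ergodic_rate_le_blockage_rate.
Qed.
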